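(* Every object $(V,\mathsf b,\mathsf t)$ of $\mathcal E_0$ (equivalently, every fiber functor on $\mathbf{CrysTL}$) is isomorphic to an inflation $(V',\mathsf b',\mathsf t')\triangleright(\Bbbk^{\oplus 2m},\mathsf J_2^{\perp m},\mathsf t'')$ with $m>0$, where $(\Bbbk^{\oplus 2m},\mathsf J_2^{\perp m},\mathsf t'')\in\mathcal E_0$ (so $\mathsf t''\in\mathcal R(\mathsf J_2^{\perp m})\otimes\mathcal L(\mathsf J_2^{\perp m})$) and $(V',\mathsf b',\mathsf t')$ is a triple with $\mathsf t'\in\mathcal R(\mathsf b')\otimes\mathcal L(\mathsf b')$ and $\mathsf b'(\mathsf t')=0$.
   Context: $\Bbbk=\mathbb C$. For a bilinear form $\mathsf b$ on a finite-dimensional space $V$, $\mathcal L(\mathsf b)=\{v:\mathsf b(v,-)=0\}$ and $\mathcal R(\mathsf b)=\{v:\mathsf b(-,v)=0\}$, and $\mathsf b(\mathsf t)$ denotes $\mathsf b$ applied to $\mathsf t\in V\otimes V$ as a linear map $V\otimes V\to\Bbbk$. $\mathcal E_0$ is the category whose objects are triples $(V,\mathsf b,\mathsf t)$ with $V$ finite-dimensional, $\mathsf b$ bilinear on $V$, $\mathsf t\in\mathcal R(\mathsf b)\otimes\mathcal L(\mathsf b)$ and $\mathsf b(\mathsf t)=1$; morphisms $(V,\mathsf b,\mathsf t)\to(W,\mathsf c,\mathsf s)$ are linear maps $f$ with $\mathsf c(fv,fw)=\mathsf b(v,w)$ and $(f\otimes f)(\mathsf t)=\mathsf s$. (It is equivalent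 to the category of fiber functors — faithful exact $\Bbbk$-linear monoidal functors to $\mathbf{vec}$ — on the Cauchy completion $\mathbf{CrysTL}$ of the category $\mathcal{TL}_0(\Bbbk)$ generated by $\mathrm{cup}:\mathbf 0\to\mathbf 2$, $\mathrm{cap}:\mathbf 2\to\mathbf 0$ with both zig-zags $0$ and $\mathrm{cap}\circ\mathrm{cup}=\mathrm{id}_{\mathbf 0}$, via $U\mapsto(U(\mathbf 1),U(\mathrm{cap}),U(\mathrm{cup}))$.) Given $(V,\mathsf b,\mathsf t)\in\mathcal E_0$ and a triple $(V',\mathsf b',\mathsf t')$ with $\mathsf t'\in\mathcal R(\mathsf b')\otimes\mathcal L(\mathsf b')$ and $\mathsf b'(\mathsf t')=0$, the inflation is $(V',\mathsf b',\mathsf t')\triangleright(V,\mathsf b,\mathsf t)=(V'\oplus V,\mathsf b'\perp\mathsf b,\mathsf t+\mathsf t')\in\mathcal E_0$, where $\perp$ denotes orthogonal direct sum of forms. $\mathsf J_2$ is the bilinear form on $\Bbbk^2$ with matrix $\begin{pmatrix}0&1\\0&0\end{pmatrix}$, i.e. $\mathsf J_2(x,y)=x_1y_2$, and $\mathsf J_2^{\perp m}$ is the orthogonal sum of $m$ copies on $\Bbbk^{\oplus 2m}$. *)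

From HB Require Import structures.
From mathcomp Require Import all_boot all_algebra complex.
From mathcomp Require Import reals.
Set Implicit Arguments. Unset Strict Implicit. Unset Printing Implicit Defensive.
Import GRing.Theory.
Local Open Scope ring_scope.

(* Coordinates: a finite-dimensional space V is k^n with vectors 'rV_n.
   A bilinear form b is a matrix B : b(x,y) = x B y^T.
   A tensor t in V (x) V is a matrix T : t = \sum_{i,j} T i j e_i (x) e_j. *)
Section Defs.
Variable K : fieldType.

Definition bform n (B : 'M[K]_n) (x y : 'rV[K]_n) : K := (x *m B *m y^T) 0 0.

(* b(t) : b applied to t as a linear map V (x) V -> k *)
Definition bapp n (B T : 'M[K]_n) : K := \sum_(i < n) \sum_(j < n) T i j * B i j.

Definition inL n (B : 'M[K]_n) (v : 'rV[K]_n) := forall w, bform B v w = 0.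
Definition inR n (B : 'M[K]_n) (v : 'rV[K]_n) := forall w, bform B w v = 0.

Definition in_RL n (B T : 'M[K]_n) : Prop :=
  exists (k : nat) (U W : 'M[K]_(k, n)),
    T = U^T *m W /\ (forall i, inR B (row i U)) /\ (forall i, inL B (row i W)).

Definition isE0 n (B T : 'M[K]_n) : Prop := in_RL B T /\ bapp B T = 1.

(* morphisms of E_0: the linear map v |-> v *m F; (f (x) f)(t) = F^T T F *)
Definition isE0mor n p (B T : 'M[K]_n) (C S : 'M[K]_p) (F : 'M[K]_(n, p)) : Prop :=
  (forall v w, bform C (v *m F) (w *m F) = bform B v w) /\ F^T *m T *m F = S.

Definition isE0iso n p (B T : 'M[K]_n) (C S : 'M[K]_p) : Prop :=
  exists (F : 'M[K]_(n, p)) (G : 'M[K]_(p, n)),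
    isE0mor B T C S F /\ isE0mor C S B T G /\
    F *m G = 1%:M /\ G *m F = 1%:M.

Definition inflB n' n (B' : 'M[K]_n') (B : 'M[K]_n) : 'M[K]_(n' + n) :=
  block_mx B' 0 0 B.
Definition inflT n' n (T' : 'M[K]_n') (T : 'M[K]_n) : 'M[K]_(n' + n) :=
  block_mx T' 0 0 T.

(* J_2^{perp m} on k^{2m}: J(x,y) = \sum_l x_{2l} y_{2l+1} (0-based indices) *)
Definition Jperp m : 'M[K]_(2 * m) :=
  \matrix_(i, j) ((~~ odd i) && (j == i.+1 :> nat))%:R.

End Defs.

(* Write t = sum_i u_i (x) w_i with u_i in R(b), w_i in L(b), and let M be the
   matrix (b(u_i, w_j))_ij, whose trace is b(t) = 1.  The Fitting decomposition
   of M splits off a nilpotent part, of trace 0, from a part on which M is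
   invertible; the latter yields m > 0 vectors e_a in R(b) and f_a in L(b) with
   b(e_a, f_c) = delta_ac, in terms of which t = sum_ac N_ac e_a (x) f_c + t_0
   with tr N = 1.  The e_a, f_a span a copy of J_2^{perp m}; its complement cut
   out by the dual vectors b(-, f_a), b(e_a, -) is b-orthogonal to it and
   carries t_0, so in an adapted basis (b, t) becomes the orthogonal sum of
   (b', t_0) and (J_2^{perp m}, sum N_ac e_a (x) f_c), and b'(t_0) = 1 - tr N = 0. *)

From mathcomp Require Import all_boot all_algebra complex.
From mathcomp Require Import reals.
From mathcomp Require Import zify ring.
Set Implicit Arguments. Unset Strict Implicit. Unset Printing Implicit Defensive.
Import GRing.Theory.
Local Open Scope ring_scope.

Section MatrixForms.
Variable K : fieldType.

Lemma bappE n (B T : 'M[K]_n) : bapp B T = \tr (T *m B^T).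
Proof.
rewrite /bapp /mxtrace; apply: eq_bigr => i _; rewrite !mxE.
by apply: eq_bigr => j _; rewrite !mxE.
Qed.

Lemma inRE n (B : 'M[K]_n) (v : 'rV[K]_n) : inR B v <-> B *m v^T = 0.
Proof.
split=> [vR | Bv w]; last by rewrite /bform -mulmxA Bv mulmx0 mxE.
apply/matrixP => j k; rewrite [k]ord1 [RHS]mxE.
by have := vR (delta_mx 0 j); rewrite /bform -rowE -row_mul mxE.
Qed.

Lemma inLE n (B : 'M[K]_n) (v : 'rV[K]_n) : inL B v <-> v *m B = 0.
Proof.
split=> [vL | vB w]; last by rewrite /bform vB !mul0mx mxE.
apply/rowP => j; rewrite [RHS]mxE.
have := vL (delta_mx 0 j); rewrite /bform.
by rewrite trmx_delta -colE mxE.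
Qed.

Lemma in_RLP n (B T : 'M[K]_n) :
  in_RL B T <-> exists k (U W : 'M[K]_(k, n)),
    [/\ T = U^T *m W, B *m U^T = 0 & W *m B = 0].
Proof.
have rowsR k (U : 'M[K]_(k, n)) : (forall i, inR B (row i U)) <-> B *m U^T = 0.
  split=> [UR | BU i].
    apply/trmx_inj/row_matrixP => i; rewrite trmx_mul trmxK trmx0 row_mul row0.
    by have /inRE/(congr1 trmx) := UR i; rewrite trmx_mul trmxK trmx0.
  apply/inRE/trmx_inj; rewrite trmx_mul trmxK trmx0 -row_mul.
  by rewrite -[U]trmxK -trmx_mul BU trmx0 row0.
split=> [[k [U [W [-> [/rowsR UR WL]]]]] | [k [U [W [-> BU WB]]]]].
  exists k, U, W; split=> //; apply/row_matrixP => i.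
  by rewrite row_mul row0; apply/inLE.
exists k, U, W; split=> //; split; first exact/rowsR.
by move=> i; apply/inLE; rewrite -row_mul WB row0.
Qed.

End MatrixForms.

Section ChangeOfBasis.
Variables (K : fieldType) (n p : nat) (F : 'M[K]_(n, p)) (G : 'M[K]_(p, n)).
Hypothesis FG : F *m G = 1%:M.

Lemma bapp_basis (B T : 'M[K]_n) :
  bapp (G *m B *m G^T) (F^T *m T *m F) = bapp B T.
Proof.
rewrite !bappE !trmx_mul trmxK !mulmxA -(mulmxA _ F) FG mulmx1.
by rewrite mxtrace_mulC !mulmxA -trmx_mul FG trmx1 mul1mx.
Qed.

Lemma in_RL_basis (B T : 'M[K]_n) :
  in_RL B T -> in_RL (G *m B *m G^T) (F^T *m T *m F).
Proof.
case/in_RLP=> k [U [W [-> BU WB]]]; apply/in_RLP; exists k, (U *m F), (W *m F).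
split; first by rewrite trmx_mul !mulmxA.
  by rewrite trmx_mul -!mulmxA (mulmxA G^T) -trmx_mul FG trmx1 mul1mx BU mulmx0.
by rewrite -!mulmxA (mulmxA F) FG mul1mx !mulmxA WB !mul0mx.
Qed.

Lemma isE0iso_basis (B T : 'M[K]_n) : G *m F = 1%:M ->
  isE0iso B T (G *m B *m G^T) (F^T *m T *m F).
Proof.
move=> GF; have FGT : G^T *m F^T = 1%:M by rewrite -trmx_mul FG trmx1.
exists F, G; do ![split] => //.
- move=> v w; rewrite /bform trmx_mul !mulmxA -(mulmxA v) FG mulmx1.
  by rewrite -(mulmxA _ G^T) FGT mulmx1.
- by move=> v w; rewrite /bform trmx_mul !mulmxA.
- by rewrite -!mulmxA FG mulmx1 mulmxA FGT mul1mx.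
Qed.

End ChangeOfBasis.

Section OrthogonalSum.
Variables (K : fieldType) (n1 n2 : nat).
Variables (B1 T1 : 'M[K]_n1) (B2 T2 : 'M[K]_n2).

Lemma bapp_infl : bapp (inflB B1 B2) (inflT T1 T2) = bapp B1 T1 + bapp B2 T2.
Proof.
rewrite !bappE /inflB /inflT tr_block_mx mulmx_block mxtrace_block !trmx0.
by rewrite !mulmx0 addr0 add0r.
Qed.

Lemma in_RL_infl_ul : in_RL (inflB B1 B2) (inflT T1 T2) -> in_RL B1 T1.
Proof.
case/in_RLP=> k [U [W []]]; rewrite -[U]hsubmxK -[W]hsubmxK tr_row_mx.
rewrite mul_col_row => /eq_block_mx[-> _ _ _].
rewrite mul_block_col !mul0mx addr0 -col_mx0 => /eq_col_mx[BU _].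
rewrite mul_row_block !mulmx0 addr0 -row_mx0 => /eq_row_mx[WB _].
by apply/in_RLP; exists k, (lsubmx U), (lsubmx W).
Qed.

End OrthogonalSum.

Lemma mxtrace_dim_gt0 (V : nmodType) n (A : 'M[V]_n) : \tr A != 0 -> (0 < n)%N.
Proof. by case: n A => // A; rewrite /mxtrace big_ord0 eqxx. Qed.

Lemma idempotent_factor (K : fieldType) n (P : 'M[K]_n) : P *m P = P ->
  exists m (r : 'M[K]_(m, n)) (c : 'M[K]_(n, m)),
    [/\ c *m r = P, r *m c = 1%:M, r *m P = r & P *m c = c].
Proof.
move=> PP; have := col_base_full P; have := row_base_free P; have := mulmx_base P.
move: (\rank P) (row_base P) (col_base P) => m r c cr /row_freeP[R rR] /row_fullP[L Lc].
have rc : r *m c = 1%:M.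
  have := congr1 (fun X => L *m X *m R) PP; rewrite -cr.
  by rewrite !mulmxA Lc mul1mx -!mulmxA rR mulmx1.
exists m, r, c; split=> //; rewrite -cr; first by rewrite mulmxA rc mul1mx.
by rewrite -mulmxA rc mulmx1.
Qed.

Lemma complement_basis (K : fieldType) n p (H : 'M[K]_(p, n)) (S : 'M[K]_(n, p)) :
  H *m S = 1%:M -> exists n' (D : 'M[K]_(n', n)) (S' : 'M[K]_(n, n')),
    [/\ D *m S' = 1%:M, D *m S = 0, H *m S' = 0 & S' *m D + S *m H = 1%:M].
Proof.
move=> HS; have PP : (1%:M - S *m H) *m (1%:M - S *m H) = 1%:M - S *m H.
  by rewrite mulmxBr mulmx1 mulmxBl mul1mx -mulmxA (mulmxA H) HS mul1mx subrr subr0.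
have [r [D [S' [S'D DS' DP PS']]]] := idempotent_factor PP.
exists r, D, S'; split=> //.
- by rewrite -DP -mulmxA mulmxBl mul1mx -mulmxA HS mulmx1 subrr mulmx0.
- by rewrite -PS' mulmxA mulmxBr mulmx1 mulmxA HS mul1mx subrr mul0mx.
- by rewrite S'D subrK.
Qed.

Section Fitting.
Variables (K : fieldType) (k : nat) (M : 'M[K]_k.+1).
Local Notation hM := (horner_mx M).

Lemma horner_mx_comm (p q : {poly K}) : hM p * hM q = hM q * hM p.
Proof. by rewrite -!rmorphM /= mulrC. Qed.

(* The factor 'X in 'X * char_poly M makes the multiplicity a of the root 0
   positive. *)
Lemma mx_annihilator_Xn :
  exists a (q : {poly K}), [/\ (0 < a)%N, ~~ root q 0 & hM (q * 'X ^+ a) = 0].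
Proof.
pose p := 'X * char_poly M.
have p_neq0 : p != 0 by rewrite mulf_neq0 ?polyX_eq0 // monic_neq0 // char_poly_monic.
have [a [q]] := multiplicity_XsubC p 0; rewrite p_neq0 polyC0 subr0 /= => q0 def_p.
exists a, q; split=> //; last by rewrite -def_p rmorphM /= Cayley_Hamilton mulr0.
case: a def_p => // def_p; move: q0; rewrite expr0 mulr1 in def_p.
by rewrite -def_p /root hornerM hornerX mul0r eqxx.
Qed.

Lemma Fitting_mx : exists (P Q : 'M[K]_k.+1) a,
  [/\ P * P = P, M * P = P * M, M * P * Q = P & (M * (1 - P)) ^+ a = 0].
Proof.
have [a [q [a_gt0 q0 Mq]]] := mx_annihilator_Xn.
have : coprimep ('X ^+ a) q.
  apply: coprimep_expl; rewrite coprimep_sym.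
  by have := coprimep_XsubC q 0; rewrite polyC0 subr0 => ->.
case/Bezout_eq1_coprimepP=> -[u v] /= uv1.
have defP' : 1 - hM (u * 'X ^+ a) = hM (v * q).
  by rewrite -(rmorph1 hM) -uv1 rmorphD /= addrAC subrr add0r.
have MQ : M * hM (u * 'X ^+ a.-1) = hM (u * 'X ^+ a).
  rewrite -{1}(horner_mx_X M) -rmorphM /=; congr (hM _).
  by rewrite -[in RHS](prednK a_gt0) exprS; ring.
have MP : M * hM (u * 'X ^+ a) = hM (u * 'X ^+ a) * M.
  by have := horner_mx_comm 'X (u * 'X ^+ a); rewrite horner_mx_X.
have PP : hM (u * 'X ^+ a) * hM (u * 'X ^+ a) = hM (u * 'X ^+ a).
  have : hM (u * 'X ^+ a) * (1 - hM (u * 'X ^+ a)) = 0.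
    rewrite defP' -rmorphM /=.
    have -> : u * 'X ^+ a * (v * q) = u * v * (q * 'X ^+ a) by ring.
    by rewrite rmorphM /= Mq mulr0.
  by move/eqP; rewrite mulrBr mulr1 subr_eq0 eq_sym => /eqP.
exists (hM (u * 'X ^+ a)), (hM (u * 'X ^+ a.-1)), a; split=> //.
  by rewrite MP -mulrA MQ PP.
rewrite defP' -{1}(horner_mx_X M) -rmorphM -rmorphXn /=.
have -> : ('X * (v * q)) ^+ a = (q * 'X ^+ a) * (v ^+ a * q ^+ a.-1).
  have qa : q ^+ a = q * q ^+ a.-1 by rewrite -exprS prednK.
  by rewrite !exprMn qa; ring.
by rewrite rmorphM /= Mq mul0r.
Qed.

End Fitting.

Lemma eigenvalue_nilpotent (K : fieldType) n (N : 'M[K]_n) a z :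
  N ^+ a = 0 -> eigenvalue N z -> z = 0.
Proof.
move=> Na /eigenvalueP[v vN v_neq0].
have vNj j : v *m N ^+ j = z ^+ j *: v.
  elim: j => [|j IHj]; first by rewrite expr0 mulmx1 scale1r.
  by rewrite exprSr -mulmxE mulmxA IHj -scalemxAl vN scalerA -exprSr.
have /esym/eqP := vNj a; rewrite Na mulmx0 scaler_eq0 (negbTE v_neq0) orbF.
by rewrite expf_eq0 => /andP[_ /eqP].
Qed.

Lemma char_poly_nilpotent (C : closedFieldType) n (N : 'M[C]_n) a :
  N ^+ a = 0 -> char_poly N = 'X ^+ n.
Proof.
move=> Na; have [rs def_chi] := closed_field_poly_normal (char_poly N).
rewrite (monicP (char_poly_monic N)) scale1r in def_chi.
have rs0 z : z \in rs -> z = 0.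
  move=> z_rs; apply: (eigenvalue_nilpotent Na).
  by rewrite eigenvalue_root_char def_chi root_prod_XsubC.
have chiX : char_poly N = 'X ^+ size rs.
  rewrite def_chi; elim: rs rs0 {def_chi} => [|z rs IHrs] rs0; first by rewrite big_nil.
  rewrite big_cons (rs0 z (mem_head _ _)) subr0 IHrs ?exprS // => y y_rs.
  by apply: rs0; rewrite in_cons y_rs orbT.
by have := size_char_poly N; rewrite chiX size_polyXn => -[<-].
Qed.

Lemma mxtrace_nilpotent (C : closedFieldType) n (N : 'M[C]_n) a :
  N ^+ a = 0 -> \tr N = 0.
Proof.
case: n N => [|n] N Na; first by rewrite /mxtrace big_ord0.
apply/eqP; rewrite -oppr_eq0 -char_poly_trace // (char_poly_nilpotent Na).
by rewrite coefXn eqn_leq ltnn andbF.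
Qed.

Lemma mxtrace1_split (C : closedFieldType) k (M : 'M[C]_k) : \tr M = 1 ->
  exists m k0 (X Y : 'M[C]_(m, k)) (N : 'M[C]_m) (X0 Y0 : 'M[C]_(k0, k)),
  [/\ X *m M *m Y^T = 1%:M, X^T *m N *m Y + X0^T *m Y0 = 1%:M,
      X0 *m M *m Y^T = 0, X *m M *m Y0^T = 0 & \tr N = 1].
Proof.
case: k M => [|k] M trM.
  by move: (@mxtrace_dim_gt0 _ _ M); rewrite trM oner_neq0 => /(_ isT).
have [P [Q [a [PP MP MPQ nilM]]]] := Fitting_mx M.
have P'P' : (1 - P) * (1 - P) = 1 - P.
  by rewrite mulrBr mulr1 mulrBl mul1r PP subrr subr0.
have trMP : \tr (M *m P) = 1.
  have := mxtrace_nilpotent nilM; rewrite mulrBr mulr1 raddfB /= trM mulmxE.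
  by move/eqP; rewrite subr_eq0 => /eqP <-.
have P'MP : (1 - P) *m M *m P = 0.
  by rewrite !mulmxE mulrBl mul1r mulrBl -MP -mulrA PP subrr.
have PMP' : P *m M *m (1 - P) = 0.
  by rewrite !mulmxE -MP mulrBr mulr1 -mulrA PP subrr.
have [m [r [c [cr rc rP Pc]]]] := idempotent_factor PP.
have [k0 [r0 [c0 [cr0 rc0 r0P' P'c0]]]] := idempotent_factor P'P'.
(* With P = c r, N0 = r M c is M acting on the invertible part, with inverse
   r Q c; tr N0 = tr (M P) = 1 since M (1 - P) is nilpotent. *)
have [N0 defN0] : {N0 | r *m M *m c = N0} by exists (r *m M *m c).
have N0_unit : N0 \in unitmx.
  suff /mulmx1_unit[] : N0 *m (r *m Q *m c) = 1%:M by [].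
  have -> : N0 *m (r *m Q *m c) = r *m (M *m (c *m r) *m Q) *m c.
    by rewrite -defN0 !mulmxA.
  by rewrite cr [M *m P *m Q]MPQ rP rc.
exists m, k0, r, (c *m invmx N0)^T, N0^T, r0, c0^T; rewrite !trmxK; split.
- by rewrite mulmxA defN0 mulmxV.
- rewrite trmx_mul -mulmxA (mulmxA N0^T) -trmx_mul mulVmx // trmx1 mul1mx.
  by rewrite -!trmx_mul cr cr0 -linearD /= addrC subrK trmx1.
- rewrite mulmxA; have -> : r0 *m M *m c = r0 *m ((1 - P) *m M *m P) *m c.
    by rewrite !mulmxA r0P' -(mulmxA _ P c) Pc.
  by rewrite P'MP mulmx0 !mul0mx.
- have -> : r *m M *m c0 = r *m (P *m M *m (1 - P)) *m c0.
    by rewrite !mulmxA rP -(mulmxA _ (1 - P) c0) P'c0.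
  by rewrite PMP' mulmx0 mul0mx.
- by rewrite mxtrace_tr -defN0 -mulmxA mxtrace_mulC -mulmxA cr.
Qed.

Lemma sum_ord_delta (R : pzSemiRingType) N (j : 'I_N) (g : 'I_N -> R) :
  \sum_i (i == j)%:R * g i = g j.
Proof.
rewrite (bigD1 j) //= eqxx mul1r big1 ?addr0 // => i /negbTE->.
by rewrite mul0r.
Qed.

Section EvenOdd.
Variables (K : fieldType) (m : nat).

Lemma double_ord_lt (a : 'I_m) : (a.*2 < 2 * m)%N.
Proof. have := ltn_ord a; lia. Qed.

Lemma doubleS_ord_lt (a : 'I_m) : (a.*2.+1 < 2 * m)%N.
Proof. have := ltn_ord a; lia. Qed.

Definition ev_ord (a : 'I_m) : 'I_(2 * m) := Ordinal (double_ord_lt a).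
Definition od_ord (a : 'I_m) : 'I_(2 * m) := Ordinal (doubleS_ord_lt a).

Lemma eq_ev_ord a b : (ev_ord a == ev_ord b) = (a == b).
Proof. by rewrite -!val_eqE /=; apply/eqP/eqP; lia. Qed.

Lemma eq_od_ord a b : (od_ord a == od_ord b) = (a == b).
Proof. by rewrite -!val_eqE /=; apply/eqP/eqP; lia. Qed.

Lemma eq_ev_od_ord a b : (ev_ord a == od_ord b) = false.
Proof. by rewrite -!val_eqE /=; apply/eqP; lia. Qed.

Lemma eq_od_ev_ord a b : (od_ord a == ev_ord b) = false.
Proof. by rewrite eq_sym eq_ev_od_ord. Qed.

Variant ord_parity_spec (i : 'I_(2 * m)) : Type :=
  | OrdEven a of i = ev_ord a
  | OrdOdd a of i = od_ord a.

Lemma ord_parityP i : ord_parity_spec i.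
Proof.
have lt_half : (i./2 < m)%N by have := ltn_ord i; rewrite ltn_half_double; lia.
have := odd_double_half i; case: (odd i) => /= def_i.
  by apply: (@OrdOdd _ (Ordinal lt_half)); apply/val_inj => /=; lia.
by apply: (@OrdEven _ (Ordinal lt_half)); apply/val_inj => /=; lia.
Qed.

Definition evenmx : 'M[K]_(m, 2 * m) := \matrix_(a, i) (i == ev_ord a)%:R.
Definition oddmx : 'M[K]_(m, 2 * m) := \matrix_(a, i) (i == od_ord a)%:R.

Lemma mul_evenmx_tr : evenmx *m evenmx^T = 1%:M.
Proof.
apply/matrixP => a b; rewrite !mxE; under eq_bigr => i _ do rewrite !mxE.
by rewrite sum_ord_delta eq_ev_ord.
Qed.

Lemma mul_oddmx_tr : oddmx *m oddmx^T = 1%:M.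
Proof.
apply/matrixP => a b; rewrite !mxE; under eq_bigr => i _ do rewrite !mxE.
by rewrite sum_ord_delta eq_od_ord.
Qed.

Lemma mul_evenmx_oddmx_tr : evenmx *m oddmx^T = 0.
Proof.
apply/matrixP => a b; rewrite !mxE; under eq_bigr => i _ do rewrite !mxE.
by rewrite sum_ord_delta eq_ev_od_ord.
Qed.

Lemma mul_oddmx_evenmx_tr : oddmx *m evenmx^T = 0.
Proof. by rewrite -[oddmx]trmxK -trmx_mul mul_evenmx_oddmx_tr trmx0. Qed.

Lemma evenmx_oddmx_partition : evenmx^T *m evenmx + oddmx^T *m oddmx = 1%:M.
Proof.
apply/matrixP => i j; rewrite !mxE.
under eq_bigr => a _ do rewrite !mxE; under [X in _ + X]eq_bigr => a _ do rewrite !mxE.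
case: (ord_parityP i) => a ->.
  rewrite [X in _ + X]big1 => [|b _]; last by rewrite eq_ev_od_ord mul0r.
  under eq_bigr => b _ do rewrite eq_sym eq_ev_ord.
  by rewrite sum_ord_delta addr0 eq_sym.
rewrite big1 => [|b _]; last by rewrite eq_od_ev_ord mul0r.
under eq_bigr => b _ do rewrite eq_sym eq_od_ord.
by rewrite sum_ord_delta add0r eq_sym.
Qed.

Lemma JperpE : Jperp K m = evenmx^T *m oddmx.
Proof.
apply/matrixP => i j; rewrite !mxE; under eq_bigr => a _ do rewrite !mxE.
case: (ord_parityP i) => a ->.
  under eq_bigr => b _ do rewrite eq_sym eq_ev_ord.
  by rewrite sum_ord_delta /= odd_double -val_eqE.
rewrite big1 => [|b _]; last by rewrite eq_od_ev_ord mul0r.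
by rewrite /= odd_double.
Qed.

End EvenOdd.

Section HyperbolicPair.
Variables (K : fieldType) (n m : nat) (B : 'M[K]_n) (E F : 'M[K]_(m, n)).
Hypotheses (BE : B *m E^T = 0) (FB : F *m B = 0) (EBF : E *m B *m F^T = 1%:M).

Local Notation Pe := (evenmx K m).
Local Notation Po := (oddmx K m).

(* The rows of hbasis are e_1, f_1, ..., e_m, f_m, interleaved as in Jperp; the
   columns of hdual, B f_a^T and B^T e_a^T, are the dual functionals b(-, f_a)
   and b(e_a, -). *)
Definition hbasis : 'M[K]_(2 * m, n) := Pe^T *m E + Po^T *m F.
Definition hdual : 'M[K]_(n, 2 * m) := B *m F^T *m Pe + B^T *m E^T *m Po.

Lemma E_hdual : E *m hdual = Pe.
Proof.
have EBt : E *m B^T = 0 by rewrite -[E]trmxK -trmx_mul BE trmx0.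
by rewrite mulmxDr !mulmxA EBF EBt !mul0mx addr0 mul1mx.
Qed.

Lemma F_hdual : F *m hdual = Po.
Proof.
have FBtE : F *m B^T *m E^T = 1%:M by rewrite -[F]trmxK -!trmx_mul mulmxA EBF trmx1.
by rewrite mulmxDr !mulmxA FB FBtE !mul0mx add0r mul1mx.
Qed.

Lemma hbasis_dual : hbasis *m hdual = 1%:M.
Proof. by rewrite mulmxDl -!mulmxA E_hdual F_hdual evenmx_oddmx_partition. Qed.

Lemma evenmx_hbasis : Pe *m hbasis = E.
Proof.
by rewrite mulmxDr !mulmxA mul_evenmx_tr mul_evenmx_oddmx_tr mul1mx mul0mx addr0.
Qed.

Lemma oddmx_hbasis : Po *m hbasis = F.
Proof.
by rewrite mulmxDr !mulmxA mul_oddmx_tr mul_oddmx_evenmx_tr mul1mx mul0mx add0r.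
Qed.

Lemma hbasis_B : hbasis *m B = Pe^T *m E *m B.
Proof. by rewrite mulmxDl -(mulmxA _ F) FB mulmx0 addr0. Qed.

Lemma B_hbasis_tr : B *m hbasis^T = B *m F^T *m Po.
Proof. by rewrite linearD /= !trmx_mul !trmxK mulmxDr !mulmxA BE mul0mx add0r. Qed.

Lemma hbasis_form : hbasis *m B *m hbasis^T = Jperp K m.
Proof. by rewrite hbasis_B -!mulmxA B_hbasis_tr (mulmxA E) (mulmxA E B) EBF mul1mx JperpE. Qed.

Lemma mulmx_hdual_eq0 p (X : 'M[K]_(p, n)) :
  X *m hdual = 0 <-> X *m B *m F^T = 0 /\ X *m B^T *m E^T = 0.
Proof.
split=> [Xd | [XBF XBE]]; last by rewrite mulmxDr !mulmxA XBF XBE !mul0mx addr0.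
split.
  have := congr1 (mulmx^~ Pe^T) Xd; rewrite mul0mx mulmxDr mulmxDl -!mulmxA.
  by rewrite mul_evenmx_tr mul_oddmx_evenmx_tr !mulmx0 addr0 mulmx1 !mulmxA.
have := congr1 (mulmx^~ Po^T) Xd; rewrite mul0mx mulmxDr mulmxDl -!mulmxA.
by rewrite mul_oddmx_tr mul_evenmx_oddmx_tr !mulmx0 add0r mulmx1 !mulmxA.
Qed.

Lemma hdual_orthogonal p (X : 'M[K]_(p, n)) :
  X *m hdual = 0 -> X *m B *m hbasis^T = 0 /\ hbasis *m B *m X^T = 0.
Proof.
case/mulmx_hdual_eq0=> XBF XBE; split.
  by rewrite -mulmxA B_hbasis_tr !mulmxA XBF mul0mx.
rewrite hbasis_B -!mulmxA; apply/trmx_inj.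
by rewrite !trmx_mul !trmxK trmx0 XBE mul0mx.
Qed.

Lemma hyperbolic_split (T : 'M[K]_n) (N : 'M[K]_m) k (U0 W0 : 'M[K]_(k, n)) :
    T = E^T *m N *m F + U0^T *m W0 -> B *m U0^T = 0 -> W0 *m B = 0 ->
    U0 *m B *m F^T = 0 -> E *m B *m W0^T = 0 ->
  exists n' (B' T' : 'M[K]_n') (L : 'M[K]_(n, n' + 2 * m)) (G : 'M[K]_(n' + 2 * m, n)),
    [/\ L *m G = 1%:M, G *m L = 1%:M, G *m B *m G^T = inflB B' (Jperp K m)
      & L^T *m T *m L = inflT T' (Pe^T *m N *m Po)].
Proof.
move=> defT BU0 W0B U0BF EBW0.
have [n' [D [S' [DS' DS HS' S'D]]]] := complement_basis hbasis_dual.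
have [DBH HBD] := hdual_orthogonal DS.
have U0S : U0 *m hdual = 0.
  apply/(mulmx_hdual_eq0 U0); split=> //.
  by rewrite -[U0]trmxK -trmx_mul BU0 trmx0 mul0mx.
have W0S : W0 *m hdual = 0.
  apply/(mulmx_hdual_eq0 W0); rewrite W0B mul0mx; split=> //.
  by rewrite -[W0]trmxK -!trmx_mul mulmxA EBW0 trmx0.
have ES' : E *m S' = 0 by rewrite -evenmx_hbasis -mulmxA HS' mulmx0.
have FS' : F *m S' = 0 by rewrite -oddmx_hbasis -mulmxA HS' mulmx0.
have defT_XY p q (X : 'M[K]_(n, p)) (Y : 'M[K]_(n, q)) :
    X^T *m T *m Y = (E *m X)^T *m N *m (F *m Y) + (U0 *m X)^T *m (W0 *m Y).
  by rewrite defT mulmxDr mulmxDl !trmx_mul !mulmxA.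
exists n', (D *m B *m D^T), (S'^T *m T *m S'), (row_mx S' hdual), (col_mx D hbasis).
split.
- by rewrite mul_row_col S'D.
- by rewrite mul_col_row DS' DS HS' hbasis_dual -scalar_mx_block.
- by rewrite tr_col_mx mul_col_mx mul_col_row DBH HBD hbasis_form.
- rewrite tr_row_mx mul_col_mx mul_col_row !defT_XY ES' FS' U0S W0S E_hdual F_hdual.
  by rewrite !trmx0 !mul0mx !mulmx0 !addr0 add0r.
Qed.

End HyperbolicPair.

Lemma isE0_Jperp (K : fieldType) m (N : 'M[K]_m) :
  \tr N = 1 -> isE0 (Jperp K m) ((evenmx K m)^T *m N *m oddmx K m).
Proof.
move=> trN; split.
  apply/in_RLP; exists m, (evenmx K m), (N *m oddmx K m); rewrite JperpE mulmxA.
  split=> //; first by rewrite -mulmxA mul_oddmx_evenmx_tr mulmx0.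
  by rewrite -!mulmxA (mulmxA (oddmx K m)) mul_oddmx_evenmx_tr mul0mx !mulmx0.
rewrite bappE JperpE trmx_mul trmxK !mulmxA -(mulmxA _ (oddmx K m)) mul_oddmx_tr mulmx1.
by rewrite -mulmxA mxtrace_mulC -mulmxA mul_evenmx_tr mulmx1.
Qed.

Lemma E0_hyperbolic_decomposition (C : closedFieldType) n (B T : 'M[C]_n) :
  isE0 B T ->
  exists m (E F : 'M[C]_(m, n)) (N : 'M[C]_m) k (U0 W0 : 'M[C]_(k, n)),
  [/\ B *m E^T = 0, F *m B = 0, E *m B *m F^T = 1%:M & \tr N = 1] /\
  [/\ T = E^T *m N *m F + U0^T *m W0, B *m U0^T = 0, W0 *m B = 0,
      U0 *m B *m F^T = 0 & E *m B *m W0^T = 0].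
Proof.
case=> /in_RLP[k [U [W [defT BU WB]]]] bT.
have trM : \tr (U *m B *m W^T) = 1.
  by rewrite -bT bappE defT -mulmxA mxtrace_mulC -mxtrace_tr !trmx_mul !trmxK mulmxA.
have [m [k0 [X [Y [N [X0 [Y0 [XMY splitI X0MY XMY0 trN]]]]]]]] := mxtrace1_split trM.
exists m, (X *m U), (Y *m W), N, k0, (X0 *m U), (Y0 *m W); split; split=> //.
- by rewrite trmx_mul mulmxA BU mul0mx.
- by rewrite -mulmxA WB mulmx0.
- by rewrite trmx_mul -XMY !mulmxA.
- by rewrite defT !trmx_mul -{1}[W]mul1mx -splitI mulmxDl mulmxDr !mulmxA.
- by rewrite trmx_mul mulmxA BU mul0mx.
- by rewrite -mulmxA WB mulmx0.
- by rewrite trmx_mul -X0MY !mulmxA.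
- by rewrite trmx_mul -XMY0 !mulmxA.
Qed.

Theorem mainTheorem19 (R : realType) (n : nat) (B T : 'M[R[i]]_n) :
  isE0 B T ->
  exists (n' m : nat) (B' T' : 'M[R[i]]_n') (T'' : 'M[R[i]]_(2 * m)),
    (0 < m)%N /\
    isE0 (Jperp _ m) T'' /\
    in_RL B' T' /\ bapp B' T' = 0 /\
    isE0iso B T (inflB B' (Jperp _ m)) (inflT T' T'').
Proof.
move=> E0BT; have [RL_BT bT] := E0BT.
have [m [E [F [N [k [U0 [W0 [[BE FB EBF trN] [defT BU0 W0B U0BF EBW0]]]]]]]]] :=
  E0_hyperbolic_decomposition E0BT.
have [n' [B' [T' [L [G [LG GL defB defT']]]]]] :=
  hyperbolic_split BE FB EBF defT BU0 W0B U0BF EBW0.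
set T'' := _ *m N *m _ in defT'.
have [_ bJ] := isE0_Jperp trN.
exists n', m, B', T', T''; split.
  by apply: (@mxtrace_dim_gt0 _ _ N); rewrite trN oner_neq0.
split; first exact: isE0_Jperp.
split.
  by have := in_RL_basis LG RL_BT; rewrite defB defT'; apply: in_RL_infl_ul.
split; last by rewrite -defB -defT'; apply: isE0iso_basis.
have := bapp_basis LG B T; rewrite defB defT' bapp_infl bT bJ.
by move/(canRL (addrK 1)); rewrite subrr.
Qed.
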